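(* Consider problem (VP) under the standing assumptions at $\bar x\in Q_0$. Let $\bar x$ be a local Geoffrion properly efficient solution of (VP) and suppose $L(Q;\bar x)\subset T(Q_0;\bar x)$, where $L(Q;\bar x):=\{v\in X: f_i^{\circ}(\bar x,v)\leqq0\ \forall i\in I,\ g_j^{\circ}(\bar x,v)\leqq0\ \forall j\in J(\bar x)\}$. Then there is no $u\in X$ such that $f_i^{\circ}(\bar x,u)\leqq0$ for all $i\in I$, $f_i^{\circ}(\bar x,u)<0$ for at least one $i\in I$, and $g_j^{\circ}(\bar x,u)\leqq 0$ for all $j\in J(\bar x)$.
   Context: Standing setting: $X$ is a Banach space; $I=\{1,\dots,p\}$, $J=\{1,\dots,m\}$; $f_i,g_j\colon X\to\mathbb{R}$; (VP) minimizes $f=(f_1,\dots,f_p)$ over $Q_0:=\{x\in X: g_j(x)\leqq 0,\ j\in J\}$. $J(\bar x):=\{j\in J: g_j(\bar x)=0\}$. Standing assumptions: $f_i$ ($i\in I$), $g_j$ ($j\in J(\bar x)$) locally Lipschitz at $\bar x$; $g_j$ ($j\notin J(\bar x)$) continuous at $\bar x$. $Q:=Q_0\cap\{x: f_i(x)\leqq f_i(\bar x),\ i\in I\}$. Clarke derivative: $F^{\circ}(\bar x,u):=\limsup_{x\to\bar x,\,t\downarrow0}\frac{F(x+tu)-F(x)}{t}$. Tangent cone: $T(\Omega;\bar x):=\{d:\exists t_k\downarrow0,\ \exists d^k\to d,\ \bar x+t_kd^k\in\Omega\ \forall k\}$. Local Geoffrion properly efficient solution: there is a neighborhood $U$ of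 $\bar x$ such that (a) no $x\in U\cap Q_0$ has $f(x)\leqq f(\bar x)$ componentwise with $f(x)\ne f(\bar x)$, and (b) there is $M>0$ such that for every $i\in I$ and every $x\in U\cap Q_0$ with $f_i(x)<f_i(\bar x)$ there exists $j\in I$ with $f_j(x)>f_j(\bar x)$ and $\frac{f_i(\bar x)-f_i(x)}{f_j(x)-f_j(\bar x)}\leqq M$. *)

From Stdlib Require Import Reals Lra ClassicalEpsilon.
Open Scope R_scope.

Record BanachSpace := {
  carrier :> Type;
  vzero : carrier;
  vadd : carrier -> carrier -> carrier;
  vopp : carrier -> carrier;
  vscal : R -> carrier -> carrier;
  vnorm : carrier -> R;
  vadd_assoc : forall x y z, vadd x (vadd y z) = vadd (vadd x y) z;
  vadd_comm : forall x y, vadd x y = vadd y x;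
  vadd_0 : forall x, vadd x vzero = x;
  vadd_opp : forall x, vadd x (vopp x) = vzero;
  vscal_1 : forall x, vscal 1 x = x;
  vscal_assoc : forall a b x, vscal a (vscal b x) = vscal (a * b) x;
  vscal_distr_v : forall a x y, vscal a (vadd x y) = vadd (vscal a x) (vscal a y);
  vscal_distr_s : forall a b x, vscal (a + b) x = vadd (vscal a x) (vscal b x);
  vnorm_eq0 : forall x, vnorm x = 0 -> x = vzero;
  vnorm_scal : forall a x, vnorm (vscal a x) = Rabs a * vnorm x;
  vnorm_triangle : forall x y, vnorm (vadd x y) <= vnorm x + vnorm y;
  vcomplete : forall u : nat -> carrier,
    (forall eps, eps > 0 -> exists N, forall n k, (n >= N)%nat -> (k >= N)%nat ->
        vnorm (vadd (u n) (vopp (u k))) < eps) ->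
    exists l, forall eps, eps > 0 -> exists N, forall n, (n >= N)%nat ->
        vnorm (vadd (u n) (vopp l)) < eps
}.

Arguments vzero {_}. Arguments vadd {_}. Arguments vopp {_}.
Arguments vscal {_}. Arguments vnorm {_}.

Definition vsub {X : BanachSpace} (x y : X) : X := vadd x (vopp y).

Definition loc_lipschitz {X : BanachSpace} (F : X -> R) (xb : X) : Prop :=
  exists K delta, delta > 0 /\ forall x y : X,
    vnorm (vsub x xb) < delta -> vnorm (vsub y xb) < delta ->
    Rabs (F x - F y) <= K * vnorm (vsub x y).

Definition continuous_at {X : BanachSpace} (F : X -> R) (xb : X) : Prop :=
  forall eps, eps > 0 -> exists delta, delta > 0 /\ forall x : X,
    vnorm (vsub x xb) < delta -> Rabs (F x - F xb) < eps.

Definition is_clarke {X : BanachSpace} (F : X -> R) (xb u : X) (l : R) : Prop :=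
  (forall eps, eps > 0 -> exists delta, delta > 0 /\
     forall (x : X) t, vnorm (vsub x xb) < delta -> 0 < t < delta ->
       (F (vadd x (vscal t u)) - F x) / t <= l + eps) /\
  (forall eps delta, eps > 0 -> delta > 0 ->
     exists (x : X) t, vnorm (vsub x xb) < delta /\ 0 < t < delta /\
       (F (vadd x (vscal t u)) - F x) / t > l - eps).

(* Clarke generalized directional derivative F°(xb; u) (finite for locally
   Lipschitz F; an arbitrary real otherwise, never used in that case). *)
Definition clarke {X : BanachSpace} (F : X -> R) (xb u : X) : R :=
  epsilon (inhabits 0) (fun l => is_clarke F xb u l).

Definition tangent_cone {X : BanachSpace} (Omega : X -> Prop) (xb d : X) : Prop :=
  exists (t : nat -> R) (dk : nat -> X),
    (forall k, t k > 0) /\ Un_cv t 0 /\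
    (forall eps, eps > 0 -> exists N, forall k, (k >= N)%nat -> vnorm (vsub (dk k) d) < eps) /\
    (forall k, Omega (vadd xb (vscal (t k) (dk k)))).

(* Indices are 0-based: I = {0,...,p-1}, J = {0,...,m-1}. *)
Definition Q0 {X : BanachSpace} (m : nat) (g : nat -> X -> R) (x : X) : Prop :=
  forall j, (j < m)%nat -> g j x <= 0.

Definition Qset {X : BanachSpace} (p m : nat) (f g : nat -> X -> R) (xb x : X) : Prop :=
  Q0 m g x /\ forall i, (i < p)%nat -> f i x <= f i xb.

Definition active {X : BanachSpace} (m : nat) (g : nat -> X -> R) (xb : X) (j : nat) : Prop :=
  (j < m)%nat /\ g j xb = 0.

Definition Lcone {X : BanachSpace} (p m : nat) (f g : nat -> X -> R) (xb v : X) : Prop :=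
  (forall i, (i < p)%nat -> clarke (f i) xb v <= 0) /\
  (forall j, active m g xb j -> clarke (g j) xb v <= 0).

(* Local Geoffrion proper efficiency (neighborhood taken as an open ball) *)
Definition local_geoffrion {X : BanachSpace} (p m : nat) (f g : nat -> X -> R) (xb : X) : Prop :=
  exists r, r > 0 /\
  (forall x : X, vnorm (vsub x xb) < r -> Q0 m g x ->
     ~ ((forall i, (i < p)%nat -> f i x <= f i xb) /\
        (exists i, (i < p)%nat /\ f i x <> f i xb))) /\
  (exists M, M > 0 /\
     forall i (x : X), (i < p)%nat -> vnorm (vsub x xb) < r -> Q0 m g x ->
       f i x < f i xb ->
       exists j, (j < p)%nat /\ f j x > f j xb /\
         (f i xb - f i x) / (f j x - f j xb) <= M).

(** Suppose [u] were such a direction. It lies in [L(Q; xb)], hence in the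
    tangent cone of the feasible set: there are feasible points
    [x_k = xb + t_k d_k] with [t_k -> 0+] and [d_k -> u].  The Clarke upper
    limit at [xb] in direction [u], together with the Lipschitz bound for
    replacing [u] by [d_k], gives [f_i x_k - f_i xb <= t_k (f_i°(xb; u) + e)]
    eventually, for every [i] and every [e > 0].  So along [x_k] the objective
    [f_i0] with [f_i0°(xb; u) = c < 0] drops by at least [t_k |c|/2], while
    every objective rises by at most [t_k e]; the Geoffrion trade-off ratio is
    then at least [|c| / 2e], which exceeds the bound [M] once [e] is small. *)

From Stdlib Require Import Reals Lra Lia Classical ClassicalEpsilon.
Open Scope R_scope.

Lemma Rdiv_le_mul (a b t : R) : 0 < t -> a / t <= b -> a <= t * b.
Proof.
  intros Ht Hab. replace a with (t * (a / t)) by (field; lra).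
  apply Rmult_le_compat_l; lra.
Qed.

Lemma Rabs_div_le (a b t : R) : 0 < t -> Rabs a <= b * t -> Rabs (a / t) <= b.
Proof.
  intros Ht Hab. unfold Rdiv. rewrite Rabs_mult, Rabs_inv, (Rabs_pos_eq t) by lra.
  replace b with (b * t * / t) by (field; lra).
  apply Rmult_le_compat_r; [left; apply Rinv_0_lt_compat|]; lra.
Qed.

Section VectorAlgebra.
Variable X : BanachSpace.
Implicit Types x y z w : X.

Lemma vadd_0l x : vadd vzero x = x.
Proof. rewrite vadd_comm; apply vadd_0. Qed.

Lemma vadd_eq0_vopp x y : vadd x y = vzero -> y = vopp x.
Proof.
  intros H. rewrite <- (vadd_0 _ y), <- (vadd_opp _ x), vadd_assoc, (vadd_comm _ y), H.
  apply vadd_0l.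
Qed.

Lemma vscal_0l x : vscal 0 x = vzero.
Proof.
  assert (H : vadd (vscal 0 x) (vscal 0 x) = vscal 0 x).
  { rewrite <- vscal_distr_s. f_equal. ring. }
  rewrite <- (vadd_opp _ (vscal 0 x)). rewrite <- H at 2.
  rewrite <- vadd_assoc, vadd_opp, vadd_0. reflexivity.
Qed.

Lemma vopp_vscal x : vopp x = vscal (-1) x.
Proof.
  symmetry. apply vadd_eq0_vopp. rewrite <- (vscal_1 _ x) at 1.
  rewrite <- vscal_distr_s. replace (1 + -1) with 0 by ring. apply vscal_0l.
Qed.

Lemma vadd_addACA x y z w : vadd (vadd x y) (vadd z w) = vadd (vadd x z) (vadd y w).
Proof. rewrite <- !vadd_assoc. f_equal. rewrite !vadd_assoc. f_equal. apply vadd_comm. Qed.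

Lemma vopp_add x y : vopp (vadd x y) = vadd (vopp x) (vopp y).
Proof. symmetry. apply vadd_eq0_vopp. rewrite vadd_addACA, !vadd_opp. apply vadd_0. Qed.

Lemma vsub_add2l x y z : vsub (vadd x y) (vadd x z) = vsub y z.
Proof. unfold vsub. rewrite vopp_add, vadd_addACA, vadd_opp. apply vadd_0l. Qed.

Lemma vadd_subKl x w : vsub (vadd x w) x = w.
Proof. unfold vsub. rewrite (vadd_comm _ x), <- vadd_assoc, vadd_opp. apply vadd_0. Qed.

Lemma vsub_addK x y : vadd (vsub x y) y = x.
Proof. unfold vsub. rewrite <- vadd_assoc, (vadd_comm _ (vopp y)), vadd_opp. apply vadd_0. Qed.

Lemma vscal_vsub (a : R) x y : vscal a (vsub x y) = vsub (vscal a x) (vscal a y).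
Proof.
  unfold vsub. rewrite vscal_distr_v, !vopp_vscal, !vscal_assoc.
  f_equal. f_equal. ring.
Qed.

Lemma vnorm_0 : vnorm (@vzero X) = 0.
Proof. rewrite <- (vscal_0l vzero), vnorm_scal, Rabs_R0. ring. Qed.

Lemma vnorm_vsub_self x : vnorm (vsub x x) = 0.
Proof. unfold vsub. rewrite vadd_opp. apply vnorm_0. Qed.

Lemma vnorm_opp x : vnorm (vopp x) = vnorm x.
Proof. rewrite vopp_vscal, vnorm_scal, Rabs_left by lra. ring. Qed.

Lemma vnorm_ge0 x : 0 <= vnorm x.
Proof. pose proof (vnorm_triangle _ x (vopp x)). rewrite vadd_opp, vnorm_0, vnorm_opp in H. lra. Qed.

Lemma vnorm_vscal_ge0 (a : R) x : 0 <= a -> vnorm (vscal a x) = a * vnorm x.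
Proof. intros Ha. rewrite vnorm_scal, Rabs_pos_eq; auto. Qed.

Lemma vnorm_le_vsub_add x y : vnorm x <= vnorm (vsub x y) + vnorm y.
Proof. rewrite <- (vsub_addK x y) at 1. apply vnorm_triangle. Qed.

End VectorAlgebra.

Definition eventually (P : nat -> Prop) : Prop :=
  exists N, forall k, (k >= N)%nat -> P k.

Lemma eventually_and (P Q : nat -> Prop) :
  eventually P -> eventually Q -> eventually (fun k => P k /\ Q k).
Proof.
  intros [N1 H1] [N2 H2]. exists (Nat.max N1 N2). intros k Hk.
  split; [apply H1 | apply H2]; lia.
Qed.

Lemma eventually_mono (P Q : nat -> Prop) :
  (forall k, P k -> Q k) -> eventually P -> eventually Q.
Proof. intros HPQ [N HN]. exists N. auto. Qed.

Lemma eventually_forall_lt (p : nat) (P : nat -> nat -> Prop) :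
  (forall i, (i < p)%nat -> eventually (P i)) ->
  eventually (fun k => forall i, (i < p)%nat -> P i k).
Proof.
  induction p as [|p IH]; intros H.
  - exists 0%nat. intros; lia.
  - apply (eventually_mono (fun k => (forall i, (i < p)%nat -> P i k) /\ P p k)).
    + intros k [Hlt Hp] i Hi. destruct (Nat.eq_dec i p) as [->|Hne]; auto.
      apply Hlt. lia.
    + apply eventually_and; auto.
Qed.

Lemma eventually_Un_cv_0_lt (t : nat -> R) (rho : R) :
  Un_cv t 0 -> rho > 0 -> eventually (fun k => t k < rho).
Proof.
  intros Ht Hrho. destruct (Ht rho Hrho) as [N HN]. exists N. intros k Hk.
  specialize (HN k Hk). unfold Rdist in HN. rewrite Rminus_0_r in HN.
  pose proof (Rle_abs (t k)). lra.
Qed.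

Section ClarkeDerivative.
Variable X : BanachSpace.

Definition is_limsup (q : X -> R -> R) (xb : X) (l : R) : Prop :=
  (forall eps, eps > 0 -> exists delta, delta > 0 /\
     forall x t, vnorm (vsub x xb) < delta -> 0 < t < delta -> q x t <= l + eps) /\
  (forall eps delta, eps > 0 -> delta > 0 ->
     exists x t, vnorm (vsub x xb) < delta /\ 0 < t < delta /\ q x t > l - eps).

Definition bounded_near (q : X -> R -> R) (xb : X) : Prop :=
  exists B d0, d0 > 0 /\
    forall x t, vnorm (vsub x xb) < d0 -> 0 < t < d0 -> Rabs (q x t) <= B.

Lemma inf_exists (U : R -> Prop) (b0 lb : R) :
  U b0 -> (forall b, U b -> lb <= b) ->
  exists l, (forall b, U b -> l <= b) /\
            (forall eps, eps > 0 -> exists b, U b /\ b < l + eps).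
Proof.
  intros Hb0 Hlb.
  set (E := fun y => forall b, U b -> y <= b).
  destruct (completeness E) as [l [Hub Hleast]].
  - exists b0. intros y Hy. apply Hy, Hb0.
  - exists lb. exact Hlb.
  - exists l. split.
    + intros b Hb. apply Hleast. intros y Hy. apply Hy, Hb.
    + intros eps Heps. apply NNPP. intros Hno.
      assert (HE : E (l + eps)).
      { intros b Hb. apply Rnot_lt_le. intros Hlt. apply Hno. eauto. }
      specialize (Hub _ HE). lra.
Qed.

Lemma limsup_exists (q : X -> R -> R) (xb : X) :
  bounded_near q xb -> exists l, is_limsup q xb l.
Proof.
  intros [B [d0 [Hd0 Hq]]].
  set (U := fun b => exists delta, delta > 0 /\ forall x t,
              vnorm (vsub x xb) < delta -> 0 < t < delta -> q x t <= b).
  assert (HUB : U B).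
  { exists d0. split; auto. intros x t Hx Ht. pose proof (Rle_abs (q x t)).
    specialize (Hq x t Hx Ht). lra. }
  assert (Hlower : forall b, U b -> - B <= b).
  { intros b [delta [Hdelta Hb]].
    set (t := Rmin delta d0 / 2).
    pose proof (Rmin_glb_lt delta d0 0 Hdelta Hd0).
    pose proof (Rmin_l delta d0). pose proof (Rmin_r delta d0).
    assert (0 < t <= Rmin delta d0 / 2) by (unfold t; lra).
    pose proof (vnorm_vsub_self X xb).
    pose proof (Hb xb t ltac:(lra) ltac:(lra)).
    pose proof (Hq xb t ltac:(lra) ltac:(lra)).
    pose proof (Rle_abs (- q xb t)). rewrite Rabs_Ropp in *. lra. }
  destruct (inf_exists U B (- B) HUB Hlower) as [l [Hlow Happrox]].
  exists l. split.
  - intros eps Heps. destruct (Happrox eps Heps) as [b [[delta [Hdelta Hb]] Hbl]].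
    exists delta. split; auto. intros x t Hx Ht. specialize (Hb x t Hx Ht). lra.
  - intros eps delta Heps Hdelta. apply NNPP. intros Hno.
    assert (HU : U (l - eps)).
    { exists delta. split; auto. intros x t Hx Ht. apply Rnot_lt_le. intros Hlt.
      apply Hno. exists x, t. auto. }
    specialize (Hlow _ HU). lra.
Qed.

Lemma lipschitz_quotient_bounded (F : X -> R) (xb u : X) :
  loc_lipschitz F xb ->
  bounded_near (fun x t => (F (vadd x (vscal t u)) - F x) / t) xb.
Proof.
  intros [K [dL [HdL HL]]].
  pose proof (vnorm_ge0 X u).
  set (d0 := dL / (1 + vnorm u)).
  assert (Hd0 : d0 * (1 + vnorm u) = dL) by (unfold d0; field; lra).
  assert (Hd0pos : d0 > 0) by (unfold d0; apply Rdiv_lt_0_compat; lra).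
  exists (Rabs K * vnorm u), d0. split; auto.
  intros x t Hx Ht.
  assert (Hstep : vnorm (vscal t u) = t * vnorm u) by (apply vnorm_vscal_ge0; lra).
  apply Rabs_div_le; [lra|].
  eapply Rle_trans; [apply HL|].
  - unfold vsub. rewrite <- vadd_assoc, (vadd_comm _ (vscal t u)), vadd_assoc.
    eapply Rle_lt_trans; [apply vnorm_triangle|]. fold (vsub x xb). nra.
  - nra.
  - rewrite vadd_subKl, Hstep. pose proof (Rle_abs K).
    replace (Rabs K * vnorm u * t) with (Rabs K * (t * vnorm u)) by ring.
    apply Rmult_le_compat_r; [nra | lra].
Qed.

Lemma clarke_spec (F : X -> R) (xb u : X) :
  loc_lipschitz F xb -> is_clarke F xb u (clarke F xb u).
Proof.
  intros HF. unfold clarke. apply epsilon_spec.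
  exact (limsup_exists _ xb (lipschitz_quotient_bounded F xb u HF)).
Qed.

End ClarkeDerivative.

Section TangentSequences.
Variable X : BanachSpace.
Variables (t : nat -> R) (u : X).
Hypothesis t_pos : forall k, t k > 0.
Hypothesis t_cv0 : Un_cv t 0.

Definition converges_to (d : nat -> X) (v : X) : Prop :=
  forall eps, eps > 0 -> eventually (fun k => vnorm (vsub (d k) v) < eps).

Lemma converges_to_const (v : X) : converges_to (fun _ => v) v.
Proof. intros eps Heps. exists 0%nat. intros k _. rewrite vnorm_vsub_self. lra. Qed.

Lemma eventually_vscal_lt (d : nat -> X) (rho : R) :
  converges_to d u -> rho > 0 -> eventually (fun k => vnorm (vscal (t k) (d k)) < rho).
Proof.
  intros Hd Hrho. pose proof (vnorm_ge0 X u).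
  apply (eventually_mono (fun k => t k < rho / (1 + vnorm u) /\ vnorm (vsub (d k) u) < 1)).
  - intros k [Htk Hdk]. pose proof (t_pos k).
    pose proof (vnorm_le_vsub_add X (d k) u).
    assert (Hrho' : rho / (1 + vnorm u) * (1 + vnorm u) = rho) by (field; lra).
    rewrite vnorm_vscal_ge0 by lra. nra.
  - apply eventually_and; [apply eventually_Un_cv_0_lt | apply Hd]; auto; try lra.
    apply Rdiv_lt_0_compat; lra.
Qed.

Lemma clarke_upper_along (F : X -> R) (xb : X) (d : nat -> X) (e : R) :
  loc_lipschitz F xb -> converges_to d u -> e > 0 ->
  eventually (fun k =>
    F (vadd xb (vscal (t k) (d k))) - F xb <= t k * (clarke F xb u + e)).
Proof.
  intros HF Hd He.
  destruct (clarke_spec X F xb u HF) as [Hup _].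
  destruct (Hup (e / 2)) as [d1 [Hd1 Hq]]; [lra|].
  destruct HF as [K [dL [HdL HL]]].
  set (ed := e / (2 * (Rabs K + 1))).
  assert (HKed : Rabs K * ed <= e / 2).
  { unfold ed. pose proof (Rabs_pos K).
    apply Rmult_le_reg_r with (2 * (Rabs K + 1)); [lra|].
    replace (Rabs K * (e / (2 * (Rabs K + 1))) * (2 * (Rabs K + 1))) with (Rabs K * e)
      by (field; lra). nra. }
  assert (Hed : ed > 0) by (unfold ed; apply Rdiv_lt_0_compat; pose proof (Rabs_pos K); lra).
  apply (eventually_mono (fun k => t k < d1 /\ vnorm (vscal (t k) (d k)) < dL /\
           vnorm (vscal (t k) u) < dL /\ vnorm (vsub (d k) u) < ed)).
  - intros k (Htd1 & Hdd & Hdu & Hclose). pose proof (t_pos k).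
    assert (Hquot : F (vadd xb (vscal (t k) u)) - F xb <= t k * (clarke F xb u + e / 2)).
    { apply Rdiv_le_mul; [lra|]. apply Hq; [rewrite vnorm_vsub_self|]; lra. }
    assert (Hlip : F (vadd xb (vscal (t k) (d k))) - F (vadd xb (vscal (t k) u))
                   <= t k * (e / 2)).
    { eapply Rle_trans; [apply Rle_abs|]. eapply Rle_trans; [apply HL|].
      - rewrite vadd_subKl. exact Hdd.
      - rewrite vadd_subKl. exact Hdu.
      - rewrite vsub_add2l, <- vscal_vsub, vnorm_vscal_ge0 by lra.
        pose proof (vnorm_ge0 X (vsub (d k) u)). pose proof (Rle_abs K). pose proof (Rabs_pos K).
        apply Rle_trans with (t k * (Rabs K * ed)); [|nra].
        rewrite <- Rmult_assoc, (Rmult_comm K), Rmult_assoc.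
        apply Rmult_le_compat_l; [lra|]. nra. }
    lra.
  - repeat apply eventually_and.
    + apply eventually_Un_cv_0_lt; auto.
    + apply eventually_vscal_lt; auto.
    + apply eventually_vscal_lt; auto. apply converges_to_const.
    + apply Hd; auto.
Qed.

End TangentSequences.

Lemma ratio_gap (M s c a b : R) :
  M > 0 -> s > 0 -> c < 0 -> s * (- c / 2) <= a -> 0 < b -> b <= s * (- c / (4 * M)) ->
  ~ a / b <= M.
Proof.
  intros HM Hs Hc Ha Hb Hbs Hab.
  apply Rdiv_le_mul in Hab; [|lra].
  assert (HMb : b * M <= s * (- c / 4)).
  { replace (s * (- c / 4)) with (s * (- c / (4 * M)) * M) by (field; lra).
    apply Rmult_le_compat_r; lra. }
  nra.
Qed.

Theorem corollary5p3 (X : BanachSpace) (p m : nat) (f g : nat -> X -> R) (xb : X)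
  (Hxb : Q0 m g xb)
  (Hf : forall i, (i < p)%nat -> loc_lipschitz (f i) xb)
  (Hga : forall j, active m g xb j -> loc_lipschitz (g j) xb)
  (Hgi : forall j, (j < m)%nat -> g j xb <> 0 -> continuous_at (g j) xb)
  (Hgeo : local_geoffrion p m f g xb)
  (HL : forall v, Lcone p m f g xb v -> tangent_cone (Q0 m g) xb v) :
  ~ exists u : X,
      (forall i, (i < p)%nat -> clarke (f i) xb u <= 0) /\
      (exists i, (i < p)%nat /\ clarke (f i) xb u < 0) /\
      (forall j, active m g xb j -> clarke (g j) xb u <= 0).
Proof.
  (* The constraints enter only through [HL], which hands us feasible points
     directly. *)
  intros [u [Hfu [[i0 [Hi0 Hneg]] Hgu]]].
  destruct Hgeo as [r [Hr [_ [M [HM Hratio]]]]].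
  destruct (HL u (conj Hfu Hgu)) as [t [d [Ht [Ht0 [Hd Hfeas]]]]].
  set (c := clarke (f i0) xb u) in *.
  set (e := - c / (4 * M)).
  assert (He : e > 0) by (unfold e; apply Rdiv_lt_0_compat; lra).
  pose proof (eventually_forall_lt p _ (fun i Hi =>
    clarke_upper_along X t u Ht Ht0 (f i) xb d e (Hf i Hi) Hd He)) as Hrises.
  pose proof (clarke_upper_along X t u Ht Ht0 (f i0) xb d (- c / 2) (Hf i0 Hi0) Hd
    ltac:(lra)) as Hdrops.
  pose proof (eventually_vscal_lt X t u Ht Ht0 d r Hd Hr) as Hnears.
  destruct (eventually_and _ _ Hrises (eventually_and _ _ Hdrops Hnears)) as [N HN].
  destruct (HN N (le_n N)) as [Hrise [Hdrop Hnear]]. fold c in Hdrop.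
  set (x := vadd xb (vscal (t N) (d N))) in *.
  pose proof (Ht N).
  assert (Hgain : t N * (- c / 2) <= f i0 xb - f i0 x) by nra.
  destruct (Hratio i0 x Hi0 ltac:(unfold x; rewrite vadd_subKl; exact Hnear) (Hfeas N)
              ltac:(nra)) as [j [Hj [Hrisej Hbound]]].
  apply (ratio_gap M (t N) c _ (f j x - f j xb) HM (Ht N) Hneg Hgain); [lra | | exact Hbound].
  specialize (Hrise j Hj). specialize (Hfu j Hj). fold e. nra.
Qed.
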